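(* Consider the $q$-composite random key predistribution scheme on $n$ sensors with key pool size $P_n$ and key ring size $K_n$, where $q$ is a fixed positive integer and $q\le K_n\le P_n$. Suppose an adversary captures a uniformly random set of $m=m(n)$ sensors and learns all keys in their key rings, and let $p_{\textnormal{compromised}}$ denote the probability that the secure link between two non-captured sensors is compromised, conditioned on these two sensors sharing at least $q$ keys. If $\frac{P_n}{K_n}=\Omega(n)$, then $p_{\textnormal{compromised}}=o(1)$ whenever $m=o(n)$.
   Context: In the $q$-composite scheme, each sensor independently receives $K_n$ distinct keys chosen uniformly at random among all $K_n$-subsets of a pool of $P_n$ keys; two sensors have a secure link iff their key rings share at least $q$ keys. The secure link between two non-captured sensors is compromised iff every key shared by their key rings belongs to the key ring of at least one captured sensor. Asymptotics are as $n\to\infty$; $x_n=\Omega(y_n)$ means $x_n\ge c\,y_n$ for some constant $c>0$ and all large $n$; $x_n=o(y_n)$ means $x_n/y_n\to 0$. *)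

From HB Require Import structures.
From mathcomp Require Import all_boot all_order all_algebra.
From mathcomp Require Import all_classical all_reals all_analysis.
Set Implicit Arguments. Unset Strict Implicit. Unset Printing Implicit Defensive.
Import Order.TTheory GRing.Theory Num.Theory.
Local Open Scope ring_scope.

(* Sample space of the relevant randomness for the q-composite scheme with key
   pool 'I_P: the key rings S1, S2 of the two non-captured sensors, and the key
   rings C i (i < m) of the m captured sensors.  All key rings are independent
   and uniform among the K-subsets of the pool, so the uniform distribution on
   the valid outcomes below is exactly the joint law. *)
Definition outcome (P m : nat) : finType :=
  ({set 'I_P} * {set 'I_P} * {ffun 'I_m -> {set 'I_P}})%type.

Definition valid_outcome (P K m : nat) (w : outcome P m) : bool :=
  [&& #|w.1.1| == K, #|w.1.2| == K & [forall i, #|w.2 i| == K]].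

Definition linked (P m q : nat) (w : outcome P m) : bool :=
  (q <= #|w.1.1 :&: w.1.2|)%N.

Definition compromised (P m : nat) (w : outcome P m) : bool :=
  (w.1.1 :&: w.1.2) \subset \bigcup_(i < m) w.2 i.

Definition p_compromised (R : realType) (P K q m : nat) : R :=
  (#|[set w : outcome P m | [&& valid_outcome K w, linked q w & compromised w]]|%:R)
  / (#|[set w : outcome P m | valid_outcome K w && linked q w]|%:R).

From HB Require Import structures.
From mathcomp Require Import all_boot all_order all_algebra perm.
From mathcomp Require Import all_classical all_reals all_analysis.
Import Order.TTheory GRing.Theory Num.Theory.

Set Implicit Arguments.
Unset Strict Implicit.
Unset Printing Implicit Defensive.

(* A union bound.  When the two sensors are linked, fix one key x they share
   (a deterministic choice, so it is independent of the captured rings).  If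
   the link is compromised, x lies in the ring of some captured sensor, and a
   uniform K-subset of the pool contains a given key with probability K/P: by
   symmetry under transpositions every key has the same probability, and the
   expected size of the subset is K.  Hence p_compromised <= m K / P, which is
   at most (m / n) / c once P / K >= c n. *)

Section KSubsets.
Variables (T : finType) (K : nat).

Definition ksubsets : {set {set T}} := [set S : {set T} | #|S| == K].

Definition ksubsets_mem (x : T) : {set {set T}} := ksubsets :&: [set S : {set T} | x \in S].

Lemma card_ksubsets_mem_le (x y : T) :
  #|ksubsets_mem x| <= #|ksubsets_mem y|.
Proof.
have tperm_inj : injective (fun S : {set T} => tperm x y @: S).
  exact: imset_inj perm_inj.
rewrite -(card_imset _ tperm_inj); apply/subset_leq_card/fintype.subsetP => U /imsetP[S].
rewrite !inE => /andP[/eqP cardS xS] ->.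
rewrite card_imset ?cardS ?eqxx; last exact: perm_inj.
by apply/imsetP; exists x; rewrite ?tpermL.
Qed.

Lemma card_ksubsets_mem_eq (x y : T) : #|ksubsets_mem x| = #|ksubsets_mem y|.
Proof. by apply/eqP; rewrite eqn_leq !card_ksubsets_mem_le. Qed.

Lemma sum_card_ksubsets_mem : \sum_x #|ksubsets_mem x| = K * #|ksubsets|.
Proof.
rewrite mulnC -sum_nat_const; under eq_bigr do rewrite -sum1_card.
rewrite (exchange_big_dep (mem ksubsets)) /= => [|x S _]; last by case/setIP.
apply: eq_bigr => S; rewrite inE => /eqP cardS.
by rewrite -{1}cardS -sum1_card; apply: eq_bigl => x; rewrite !inE cardS eqxx.
Qed.

Lemma card_ksubsets_mem (y : T) : #|ksubsets_mem y| * #|T| = K * #|ksubsets|.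
Proof.
rewrite -sum_card_ksubsets_mem (eq_bigr _ (fun x _ => card_ksubsets_mem_eq x y)).
by rewrite sum_nat_const mulnC.
Qed.

End KSubsets.

Section FfunFamily.
Variables (I T : finType).

Lemma card_ffun_family (F : I -> {set T}) :
  #|[set f : {ffun I -> T} | [forall j, f j \in F j]]| = \prod_j #|F j|.
Proof.
have := card_family (fun j => mem (F j)); rewrite foldrE big_image /= => <-.
by apply: eq_card => f; rewrite inE; apply/forallP/familyP.
Qed.

Lemma card_ffun_family_coord (A B : {set T}) (i : I) (c d : nat) :
  #|A :&: B| * c = d * #|A| ->
  #|[set f : {ffun I -> T} | [forall j, f j \in A] && (f i \in B)]| * c
  = d * #|[set f : {ffun I -> T} | [forall j, f j \in A]]|.
Proof.
move=> ratioAB; pose F j := if j == i then A :&: B else A.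
have -> : [set f : {ffun I -> T} | [forall j, f j \in A] && (f i \in B)]
        = [set f : {ffun I -> T} | [forall j, f j \in F j]].
  apply/setP => f; rewrite !inE; apply/andP/forallP => [[/forallP fA fiB] j|fF].
    by rewrite /F; case: eqP => [->|_]; rewrite ?inE ?fA ?fiB.
  split; last by have := fF i; rewrite /F eqxx inE => /andP[].
  by apply/forallP => j; have := fF j; rewrite /F; case: eqP => // -> /setIP[].
rewrite !card_ffun_family (bigD1 i) // [in RHS](bigD1 i) //= {1}/F eqxx.
rewrite mulnAC ratioAB -mulnA; congr (_ * (_ * _)).
by apply: eq_bigr => j /negbTE ji; rewrite /F ji.
Qed.

End FfunFamily.

Lemma card_ffun_ksubsets_mem (I T : finType) (K : nat) (i : I) (y : T) :
  #|[set f : {ffun I -> {set T}} |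
      [forall j, f j \in ksubsets T K] && (f i \in [set S : {set T} | y \in S])]| * #|T|
  = K * #|[set f : {ffun I -> {set T}} | [forall j, f j \in ksubsets T K]]|.
Proof. exact/card_ffun_family_coord/card_ksubsets_mem. Qed.

Lemma card_set_pair (U V : finType) (p : pred (U * V)) :
  #|[set w | p w]| = \sum_u #|[set v | p (u, v)]|.
Proof.
under [RHS]eq_bigr do rewrite -sum1_card.
by rewrite pair_big_dep -sum1_card; apply: eq_bigl => -[u v]; rewrite !inE.
Qed.

Lemma leq_card_bigcup (I T : finType) (A : I -> {set T}) :
  #|\bigcup_i A i| <= \sum_i #|A i|.
Proof.
elim/big_rec2: _ => [|i U n _ IH]; first by rewrite cards0.
by apply: leq_trans (leq_card_setU _ _) _; rewrite leq_add2l.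
Qed.

Section SharedKey.
Variables (T : finType) (q : nat).
Hypothesis q_gt0 : 0 < q.

Definition shared_key (S1 S2 : {set T}) : option T := [pick x in S1 :&: S2].

Lemma shared_keyP (S1 S2 : {set T}) :
  q <= #|S1 :&: S2| -> exists2 x, shared_key S1 S2 = Some x & x \in S1 :&: S2.
Proof.
rewrite /shared_key => qS; case: pickP => [x|no_shared]; first by exists x.
by move: (leq_trans q_gt0 qS); rewrite card_gt0 => /set0Pn[x]; rewrite no_shared.
Qed.

End SharedKey.

Section Capture.
Variables (P K q m : nat).
Hypothesis q_gt0 : 0 < q.

Definition key_captured (i : 'I_m) (w : outcome P m) : bool :=
  if shared_key w.1.1 w.1.2 is Some x then x \in w.2 i else false.

Lemma compromised_key_captured (w : outcome P m) :
  linked q w -> compromised w -> exists i, key_captured i w.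
Proof.
case/(shared_keyP q_gt0) => x keyx /[swap] /fintype.subsetP/[apply]/bigcupP[i _ Cix].
by exists i; rewrite /key_captured keyx.
Qed.

Lemma card_key_captured (i : 'I_m) :
  #|[set w : outcome P m | valid_outcome K w && linked q w && key_captured i w]| * P
  = K * #|[set w : outcome P m | valid_outcome K w && linked q w]|.
Proof.
rewrite !card_set_pair big_distrl big_distrr; apply: eq_bigr => -[S1 S2] _ /=.
rewrite /valid_outcome /linked /key_captured /=.
have [/and3P[kS1 kS2 qS] | not_linked] := boolP [&& #|S1| == K, #|S2| == K & q <= #|S1 :&: S2|].
  have [y -> _] := shared_keyP q_gt0 qS.
  have valid_ffun (f : {ffun 'I_m -> {set 'I_P}}) :
      [forall j, #|f j| == K] = [forall j, f j \in ksubsets 'I_P K].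
    by apply: eq_forallb => j; rewrite inE.
  rewrite -[X in _ * X]card_ord.
  apply: etrans (etrans _ (card_ffun_ksubsets_mem K i y)) _; [congr (_ * _)|congr (_ * _)].
    by apply: eq_card => f; rewrite !inE kS1 kS2 qS valid_ffun andbT.
  by apply: eq_card => f; rewrite !inE kS1 kS2 qS valid_ffun andbT.
rewrite !(@eq_card0 _ [set f : {ffun 'I_m -> {set 'I_P}} | _]) ?muln0 // => f; rewrite !inE.
all: by move: not_linked; case: (#|S1| == K); case: (#|S2| == K); case: (q <= _); rewrite ?andbF.
Qed.

Lemma card_compromised_le :
  #|[set w : outcome P m | [&& valid_outcome K w, linked q w & compromised w]]| * P
  <= m * K * #|[set w : outcome P m | valid_outcome K w && linked q w]|.
Proof.
pose captured i := [set w : outcome P m | valid_outcome K w && linked q w && key_captured i w].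
have sub_captured : [set w : outcome P m | [&& valid_outcome K w, linked q w & compromised w]]
    \subset \bigcup_i captured i.
  apply/fintype.subsetP => w; rewrite inE => /and3P[vw lw cw].
  have [i iw] := compromised_key_captured lw cw.
  by apply/bigcupP; exists i; rewrite // inE vw lw.
apply: (@leq_trans (\sum_i #|captured i| * P)).
  rewrite -big_distrl leq_mul2r; apply/orP; right.
  exact: leq_trans (subset_leq_card sub_captured) (leq_card_bigcup _).
rewrite (eq_bigr _ (fun i _ => card_key_captured i)).
by rewrite sum_nat_const card_ord mulnA.
Qed.

End Capture.

Local Open Scope ring_scope.

Lemma p_compromised_le (R : realType) (P K q m : nat) : (0 < q)%N -> (0 < P)%N ->
  p_compromised R P K q m <= (m * K)%:R / P%:R.
Proof.
move=> q_gt0 P_gt0; rewrite /p_compromised.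
have [->|linked_gt0] := posnP #|[set w : outcome P m | valid_outcome K w && linked q w]|.
  by rewrite invr0 mulr0 divr_ge0.
rewrite ler_pdivrMr ?ltr0n // mulrAC ler_pdivlMr ?ltr0n // -!natrM ler_nat.
exact: card_compromised_le.
Qed.

Lemma p_compromised_le_ratio (R : realType) (P K q m n : nat) (c : R) :
  (0 < q)%N -> (q <= K <= P)%N -> 0 < c -> (0 < n)%N ->
  c * n%:R <= P%:R / K%:R ->
  p_compromised R P K q m <= m%:R / n%:R / c.
Proof.
move=> q_gt0 /andP[qK KP] c_gt0 n_gt0 cn_le.
have K_gt0 : (0 < K)%N := leq_trans q_gt0 qK.
have P_gt0 : (0 < P)%N := leq_trans K_gt0 KP.
apply: le_trans (p_compromised_le R K m q_gt0 P_gt0) _.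
rewrite natrM -mulrA -mulrA -invfM; apply: ler_wpM2l => //.
by rewrite -invf_div lef_pV2 ?posrE ?mulr_gt0 ?divr_gt0 ?invr_gt0 ?ltr0n // mulrC.
Qed.

Local Open Scope classical_set_scope.

Theorem corollary1 (R : realType) (q : nat) (Pn Kn m : nat -> nat) :
  (0 < q)%N ->
  (forall n, q <= Kn n <= Pn n)%N ->
  (exists2 c : R, 0 < c &
     \forall n \near \oo, c * n%:R <= (Pn n)%:R / (Kn n)%:R) ->
  (fun n : nat => ((m n)%:R / n%:R : R)) @ \oo --> (0 : R^o) ->
  (fun n : nat => p_compromised R (Pn n) (Kn n) q (m n)) @ \oo --> (0 : R^o).
Proof.
move=> q_gt0 qKP [c c_gt0 cn_le] m_o.
have m_o_c : (fun n : nat => (m n)%:R / n%:R / c) @ \oo --> (0 : R^o).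
  by rewrite -(mul0r c^-1); apply: cvgM m_o (@cvg_cst R^o _ _ _ _).
apply: (squeeze_cvgr (f := fun=> 0) (h := fun n => (m n)%:R / n%:R / c));
  [|exact: (@cvg_cst R^o 0)|exact: m_o_c].
near=> n; apply/andP; split; first exact: divr_ge0.
apply: p_compromised_le_ratio => //; first by near: n; exists 1%N.
by near: n.
Unshelve. all: by end_near.
Qed.
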